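(* Let $\mathbb{Z}[t]$ be the polynomial ring in one variable over $\mathbb{Z}$. For all integers $j,r\ge1$ and all primes $p$, the cohomology group $H^j(\Gamma(SL_2(\mathbb{Z}[t]),p^r);\mathbb{F}_p)$ is not finitely generated (as an $\mathbb{F}_p$-vector space).
   Context: $\Gamma(SL_2(\mathbb{Z}[t]),p^r)=\ker\big(SL_2(\mathbb{Z}[t])\to SL_2(\mathbb{Z}[t]\otimes_{\mathbb{Z}}\mathbb{Z}/p^r)\big)$; cohomology is group cohomology with trivial coefficients $\mathbb{F}_p$. *)

(* Group cohomology of the congruence subgroup
   Gamma(SL_2(Z[t]), p^r) with trivial coefficients F_p, via the standard
   inhomogeneous (bar) cochain complex. *)
From HB Require Import structures.
From mathcomp Require Import all_boot all_order all_algebra.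
Set Implicit Arguments. Unset Strict Implicit. Unset Printing Implicit Defensive.
Import Order.TTheory GRing.Theory Num.Theory.
Local Open Scope ring_scope.

Notation Mat := 'M[{poly int}]_2.

(* M is in the kernel of SL_2(Z[t]) -> SL_2(Z[t] (x) Z/p^r) = SL_2((Z/p^r)[t]):
   det M = 1 and M = 1 + p^r N with N a matrix over Z[t]. *)
Definition inGamma (p r : nat) (M : Mat) : Prop :=
  \det M = 1 /\ exists N : Mat, M = 1 + ((p ^ r)%N%:R : {poly int}) *: N.

(* n-cochains: functions Gamma^n -> F_p (given as functions on n-tuples of
   matrices, only their values on tuples of elements of Gamma matter). *)
Definition cochain (p n : nat) := ('I_n -> Mat) -> 'F_p.

Definition tupleIn (p r n : nat) (g : 'I_n -> Mat) : Prop :=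
  forall k, inGamma p r (g k).

Definition face_first n (g : 'I_n.+1 -> Mat) : 'I_n -> Mat :=
  fun k => g (lift ord0 k).
Definition face_last n (g : 'I_n.+1 -> Mat) : 'I_n -> Mat :=
  fun k => g (widen_ord (leqnSn n) k).
Definition face_mul n (i : 'I_n) (g : 'I_n.+1 -> Mat) : 'I_n -> Mat :=
  fun k => if (k < i)%N then g (widen_ord (leqnSn n) k)
           else if (k == i :> nat) then g (widen_ord (leqnSn n) k) *m g (lift ord0 k)
           else g (lift ord0 k).

Definition delta (p n : nat) (f : cochain p n) : cochain p n.+1 :=
  fun g => f (face_first g)
           + \sum_(i < n) (-1) ^+ i.+1 * f (face_mul i g)
           + (-1) ^+ n.+1 * f (face_last g).

Definition is_cocycle (p r n : nat) (f : cochain p n) : Prop :=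
  forall g : 'I_n.+1 -> Mat, tupleIn p r g -> delta f g = 0.

Definition is_coboundary (p r n : nat) : cochain p n -> Prop :=
  match n return cochain p n -> Prop with
  | 0 => fun f => forall g, tupleIn p r g -> f g = 0
  | m.+1 => fun f => exists b : cochain p m,
              forall g, tupleIn p r g -> f g = delta b g
  end.

(* H^n(Gamma; F_p) is finitely generated: finitely many cocycles whose
   classes span H^n = Z^n / B^n. *)
Definition cohom_fin_gen (p r n : nat) : Prop :=
  exists (m : nat) (c : 'I_m -> cochain p n),
    (forall i, is_cocycle r (c i)) /\
    forall z : cochain p n, is_cocycle r z ->
      exists a : 'I_m -> 'F_p,
        is_coboundary r (fun g => z g - \sum_(i < m) a i * c i g).

From mathcomp Require Import all_boot all_order all_algebra.
From mathcomp Require Import zify ring.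
From Stdlib Require Import FunctionalExtensionality.
Set Implicit Arguments. Unset Strict Implicit. Unset Printing Implicit Defensive.
Import Order.TTheory GRing.Theory Num.Theory.
Local Open Scope ring_scope.

(* The matrices [[1, p^r s], [0, 1]], s in Z[t], form an abelian subgroup U of
   Gamma, and for each a the a-th coefficient of (M_12 / p^r) mod p is a
   homomorphism Gamma -> F_p.  Cup products of j such homomorphisms are
   j-cocycles, and a j-cochain can be paired with the torus cycle of j
   commuting elements of U (shuffle product of 1-cycles); the pairing kills
   coboundaries because slanting with an element of an abelian group
   anticommutes with the coboundary.  Choosing the coefficients suitably gives,
   for every m, m+1 cocycles and m+1 tori whose pairing matrix is a nonzero
   scalar matrix, so H^j is not spanned by m classes. *)

Lemma big_nat_split2 (V : nmodType) (G : nat -> V) i M : (i.+2 <= M)%N ->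
  \sum_(0 <= m < M) G m
  = \sum_(0 <= m < i) G m + (G i + G i.+1) + \sum_(i.+2 <= m < M) G m.
Proof.
move=> le_iM.
have -> : G i + G i.+1 = \sum_(i <= m < i.+2) G m.
  by rewrite big_ltn // big_nat1.
by rewrite -!big_cat_nat //; lia.
Qed.

Section SlantProduct.
Variable p : nat.
Local Notation F := 'F_p.

Definition eval_seq n (f : cochain p n) (h : nat -> Mat) : F :=
  f (fun k => h (val k)).

(* Tuples are handled as nat-indexed sequences, so that inserting or merging
   entries is plain index arithmetic; the padding value 1 is never read. *)
Definition seq_of_tuple n (g : 'I_n -> Mat) (m : nat) : Mat :=
  odflt 1 (omap g (insub m : option 'I_n)).

Lemma seq_of_tuple_lt n (h : nat -> Mat) m :
  (m < n)%N -> seq_of_tuple (fun k : 'I_n => h (val k)) m = h m.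
Proof. by move=> lt_mn; rewrite /seq_of_tuple insubT. Qed.

Lemma seq_of_tupleE n (g : 'I_n -> Mat) (k : 'I_n) : seq_of_tuple g k = g k.
Proof. by rewrite /seq_of_tuple valK. Qed.

Lemma eval_seq_of_tuple n (f : cochain p n) g : eval_seq f (seq_of_tuple g) = f g.
Proof.
by rewrite /eval_seq; congr f; apply: functional_extensionality => k; rewrite seq_of_tupleE.
Qed.

Lemma eq_eval_seq n (f : cochain p n) h h' :
  (forall k, (k < n)%N -> h k = h' k) -> eval_seq f h = eval_seq f h'.
Proof.
move=> eq_hh'; rewrite /eval_seq; congr f.
apply: functional_extensionality => k; exact: eq_hh' (ltn_ord k).
Qed.

Lemma eval_seq0 (f : cochain p 0) h h' : eval_seq f h = eval_seq f h'.
Proof. by apply: eq_eval_seq. Qed.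

(* [face_seq N m h] is the m-th face of the N-tuple h; for m = N it is h itself,
   which agrees with the last face on the N-1 entries that are read. *)
Definition face_seq (N m : nat) (h : nat -> Mat) (k : nat) : Mat :=
  if m == 0%N then h k.+1 else if m == N then h k
  else if (k < m.-1)%N then h k else if k == m.-1 then h k *m h k.+1
  else h k.+1.

Definition insert_seq (i : nat) (x : Mat) (h : nat -> Mat) (k : nat) : Mat :=
  if (k < i)%N then h k else if k == i then x else h k.-1.

Definition sign (k : nat) : F := (-1) ^+ k.

Lemma signS k : sign k.+1 = - sign k.
Proof. by rewrite /sign exprS mulN1r. Qed.

Lemma sign_sqr k : sign k * sign k = 1.
Proof. by rewrite /sign -exprD -signr_odd oddD addbb. Qed.

Lemma eval_seq_delta n (b : cochain p n) h :
  eval_seq (delta b) h = \sum_(0 <= m < n.+2) sign m * eval_seq b (face_seq n.+1 m h).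
Proof.
rewrite /eval_seq /delta big_nat_recl // big_nat_recr //= /sign expr0 mul1r.
rewrite [in RHS]big_mkord -!addrA; congr (_ + (_ + _)).
  apply: eq_bigr => i _; congr (_ * b _); apply: functional_extensionality => k.
  by rewrite /face_mul /face_seq /= eqSS (ltn_eqF (ltn_ord i)).
by congr (_ * b _); apply: functional_extensionality => k; rewrite /face_seq eqxx.
Qed.

Ltac index_cases :=
  repeat (simpl; case: ifP => ?); simpl; try (exfalso; lia); try reflexivity;
  try (f_equal; lia); try (congr (_ *m _); f_equal; lia).

(* The slant product with the 1-chain [x]: shuffle x into every position. *)
Definition slant n (x : Mat) (f : cochain p n.+1) : cochain p n :=
  fun g => \sum_(0 <= i < n.+1) sign i * eval_seq f (insert_seq i x (seq_of_tuple g)).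

Lemma eval_seq_slant n x (f : cochain p n.+1) h :
  eval_seq (slant x f) h = \sum_(0 <= i < n.+1) sign i * eval_seq f (insert_seq i x h).
Proof.
apply: eq_big_nat => i /andP[_ lt_in]; congr (_ * _); apply: eq_eval_seq => k lt_kn.
rewrite /insert_seq; case: ifP => ?; first by rewrite seq_of_tuple_lt //; lia.
by case: ifP => // ?; rewrite seq_of_tuple_lt //; lia.
Qed.

Section FaceInsert.
Variables (N : nat) (b : cochain p N) (x : Mat) (h : nat -> Mat).

Lemma face_insert_lt m i : (0 < N)%N -> (m < i)%N -> (i <= N)%N ->
  eval_seq b (face_seq N.+1 m (insert_seq i x h))
  = eval_seq b (insert_seq i.-1 x (face_seq N m h)).
Proof.
move=> *; apply: eq_eval_seq => k lt_kN; rewrite /face_seq /insert_seq; index_cases.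
Qed.

Lemma face_insert_gt m i : (i < m)%N -> (m <= N)%N ->
  eval_seq b (face_seq N.+1 m.+1 (insert_seq i x h))
  = eval_seq b (insert_seq i x (face_seq N m h)).
Proof.
move=> *; apply: eq_eval_seq => k lt_kN; rewrite /face_seq /insert_seq; index_cases.
Qed.

Lemma face_insert_comm i : (forall k, x *m h k = h k *m x) -> (i <= N)%N ->
  eval_seq b (face_seq N.+1 i.+1 (insert_seq i x h))
  = eval_seq b (face_seq N.+1 i.+1 (insert_seq i.+1 x h)).
Proof.
move=> xh_comm *; apply: eq_eval_seq => k lt_kN; rewrite /face_seq /insert_seq.
by index_cases; apply: xh_comm.
Qed.

Lemma face_insert_first : eval_seq b (face_seq N.+1 0 (insert_seq 0 x h)) = eval_seq b h.
Proof. apply: eq_eval_seq => k lt_kN; rewrite /face_seq /insert_seq; index_cases. Qed.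

Lemma face_insert_last :
  eval_seq b (face_seq N.+1 N.+1 (insert_seq N.+1 x h)) = eval_seq b h.
Proof. apply: eq_eval_seq => k lt_kN; rewrite /face_seq /insert_seq; index_cases. Qed.

End FaceInsert.


Section SlantDelta.
Variables (n : nat) (x : Mat) (b : cochain p n.+1) (h : nat -> Mat).
Hypothesis x_comm : forall k, x *m h k = h k *m x.
Let N := n.+1.
Let term i m := sign i * sign m * eval_seq b (insert_seq i x (face_seq N m h)).
Let diag i := eval_seq b (face_seq N.+1 i (insert_seq i x h)).

(* Faces away from the inserted x give the terms of [delta (slant x b)]; the two
   faces merging x with a neighbour cancel in pairs since x commutes with h. *)
Lemma slant_delta_summand i : (i <= N)%N ->
  sign i * \sum_(0 <= m < N.+2) sign m * eval_seq b (face_seq N.+1 m (insert_seq i x h))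
  = (diag i - diag i.+1) - \sum_(0 <= m < i) term i.-1 m
    - \sum_(i.+1 <= m < N.+1) term i m.
Proof.
move=> le_iN; rewrite mulr_sumr (big_nat_split2 _ (i := i)); last by lia.
have -> : \sum_(0 <= m < i) sign i * (sign m * eval_seq b (face_seq N.+1 m (insert_seq i x h)))
          = - \sum_(0 <= m < i) term i.-1 m.
  rewrite -sumrN; apply: eq_big_nat => m /andP[_ lt_mi].
  have i_gt0 : (0 < i)%N by lia.
  rewrite face_insert_lt // /term -{1}(prednK i_gt0) signS; ring.
have -> : \sum_(i.+2 <= m < N.+2) sign i * (sign m * eval_seq b (face_seq N.+1 m (insert_seq i x h)))
          = - \sum_(i.+1 <= m < N.+1) term i m.
  rewrite big_add1 /= -sumrN; apply: eq_big_nat => m /andP[lt_im le_mN].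
  rewrite face_insert_gt // /term signS; ring.
rewrite (face_insert_comm b x_comm) // /diag signS !mulrA sign_sqr mulrN sign_sqr.
ring.
Qed.

Lemma slant_delta : eval_seq (slant x (delta b)) h = - eval_seq (delta (slant x b)) h.
Proof.
rewrite eval_seq_slant.
transitivity (\sum_(0 <= i < N.+1) ((diag i - diag i.+1)
   - \sum_(0 <= m < i) term i.-1 m - \sum_(i.+1 <= m < N.+1) term i m)).
  apply: eq_big_nat => i /andP[_ lt_iN]; rewrite eval_seq_delta.
  exact: slant_delta_summand.
have diag_telescope : \sum_(0 <= i < N.+1) (diag i - diag i.+1) = 0.
  rewrite -[LHS]opprK -sumrN.
  under eq_bigr do rewrite opprB.
  by rewrite telescope_sumr // /diag face_insert_first face_insert_last subrr oppr0.
rewrite sumrB sumrB diag_telescope sub0r big_nat_recl // [X in - (X + _)]big_geq // add0r.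
rewrite [X in _ - X]big_nat_recr //= [X in _ - (_ + X)]big_geq // addr0.
rewrite -opprD -big_split /= eval_seq_delta; congr (- _).
have -> : \sum_(0 <= m < N.+1) sign m * eval_seq (slant x b) (face_seq n.+1 m h)
   = \sum_(0 <= m < N.+1) \sum_(0 <= i < N) term i m.
  apply: eq_bigr => m _; rewrite eval_seq_slant mulr_sumr.
  by apply: eq_bigr => i _; rewrite /term; ring.
rewrite exchange_big_nat /=; apply: eq_big_nat => i /andP[_ lt_iN].
by rewrite -big_cat_nat //; lia.
Qed.

End SlantDelta.

Lemma slantB n x (f f' : cochain p n.+1) :
  slant x (fun g => f g - f' g) = fun g => slant x f g - slant x f' g.
Proof.
apply: functional_extensionality => g; rewrite /slant -sumrB.
by apply: eq_bigr => i _; rewrite mulrBr.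
Qed.

Lemma slantZ n x u (f : cochain p n.+1) :
  slant x (fun g => u * f g) = fun g => u * slant x f g.
Proof.
apply: functional_extensionality => g; rewrite /slant mulr_sumr.
by apply: eq_bigr => i _; rewrite /eval_seq mulrCA.
Qed.

Lemma slant_sum n x m (c : 'I_m -> cochain p n.+1) :
  slant x (fun g => \sum_(i < m) c i g) = fun g => \sum_(i < m) slant x (c i) g.
Proof.
apply: functional_extensionality => g; rewrite /slant exchange_big /=.
by apply: eq_bigr => k _; rewrite mulr_sumr.
Qed.

(* Pairing of an n-cochain with the n-torus cycle [x_0] * ... * [x_(n-1)]
   (shuffle product of 1-cycles), computed by iterated slant products. *)
Fixpoint torus_pairing (n : nat) (xs : nat -> Mat) : cochain p n -> F :=
  match n return cochain p n -> F with
  | 0 => fun f => f (fun _ => 1)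
  | n'.+1 => fun f => torus_pairing xs (slant (xs n') f)
  end.

Lemma torus_pairingB n xs (f f' : cochain p n) :
  torus_pairing xs (fun g => f g - f' g) = torus_pairing xs f - torus_pairing xs f'.
Proof. by elim: n f f' => [|n IHn] f f' //=; rewrite slantB IHn. Qed.

Lemma torus_pairingZ n xs u (f : cochain p n) :
  torus_pairing xs (fun g => u * f g) = u * torus_pairing xs f.
Proof. by elim: n f => [|n IHn] f //=; rewrite slantZ IHn. Qed.

Lemma torus_pairing_sum n xs m (c : 'I_m -> cochain p n) :
  torus_pairing xs (fun g => \sum_(i < m) c i g) = \sum_(i < m) torus_pairing xs (c i).
Proof. by elim: n c => [|n IHn] c //=; rewrite slant_sum IHn. Qed.

Lemma eval_seq_deltaN n (c : cochain p n) h :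
  eval_seq (delta (fun g => - c g)) h = - eval_seq (delta c) h.
Proof.
by rewrite !eval_seq_delta -sumrN; apply: eq_bigr => m _; rewrite /eval_seq mulrN.
Qed.

Section TorusCoboundary.
Variable P : Mat -> Prop.
Hypothesis P1 : P 1.
Hypothesis P_comm : forall a b, P a -> P b -> a *m b = b *m a.

Lemma seq_of_tuple_in n (g : 'I_n -> Mat) m : (forall k, P (g k)) -> P (seq_of_tuple g m).
Proof. by move=> Pg; rewrite /seq_of_tuple; case: insub. Qed.

Lemma insert_seq_in i x h : P x -> (forall k, P (h k)) -> forall k, P (insert_seq i x h k).
Proof. by move=> Px Ph k; rewrite /insert_seq; case: ifP => _ //; case: ifP. Qed.

(* Slant products with elements of the commuting set P anticommute with delta,
   so the torus pairing vanishes on coboundaries restricted to P. *)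
Lemma torus_pairing_coboundary n (f : cochain p n.+1) (b : cochain p n) xs :
  (forall i, P (xs i)) ->
  (forall h, (forall k, P (h k)) -> eval_seq f h = eval_seq (delta b) h) ->
  torus_pairing xs f = 0.
Proof.
move=> Pxs; elim: n f b => [|n IHn] f b f_cob.
  rewrite /= /slant big_nat1 /sign expr0 mul1r f_cob; last first.
    by apply: insert_seq_in => // k; apply: seq_of_tuple_in => -[].
  rewrite eval_seq_delta big_nat_recl // big_nat1 /sign expr0 mul1r expr1 mulN1r.
  by apply/eqP; rewrite subr_eq0; apply/eqP; exact: eval_seq0.
apply: (IHn _ (fun g => - slant (xs n.+1) b g)) => h Ph.
rewrite eval_seq_deltaN -slant_delta; last by move=> k; apply: P_comm.
rewrite !eval_seq_slant; apply: eq_bigr => i _; congr (_ * _); apply: f_cob.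
exact: insert_seq_in.
Qed.

End TorusCoboundary.

Definition cup1 n (f : cochain p n) (psi : Mat -> F) : cochain p n.+1 :=
  fun g => eval_seq f (seq_of_tuple g) * psi (seq_of_tuple g n).

Lemma eval_seq_cup1 n (f : cochain p n) psi h :
  eval_seq (cup1 f psi) h = eval_seq f h * psi (h n).
Proof.
rewrite {1}/eval_seq /cup1 seq_of_tuple_lt //; congr (_ * _).
by apply: eq_eval_seq => k lt_kn; rewrite seq_of_tuple_lt //; lia.
Qed.

Lemma slant_cup1_0 x (f : cochain p 0) psi h :
  eval_seq (slant x (cup1 f psi)) h = eval_seq f h * psi x.
Proof.
rewrite eval_seq_slant big_nat1 eval_seq_cup1 /sign expr0 mul1r.
by congr (_ * _); apply: eval_seq0.
Qed.

Lemma slant_cup1S n x (f : cochain p n.+1) psi h :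
  eval_seq (slant x (cup1 f psi)) h
  = eval_seq (slant x f) h * psi (h n) + sign n.+1 * (eval_seq f h * psi x).
Proof.
rewrite eval_seq_slant big_nat_recr //= eval_seq_cup1; congr (_ + _).
  rewrite eval_seq_slant mulr_suml; apply: eq_big_nat => i /andP[_ lt_in].
  rewrite eval_seq_cup1 mulrA; congr (_ * psi _); rewrite /insert_seq; index_cases.
congr (_ * (_ * psi _)); last by rewrite /insert_seq; index_cases.
by apply: eq_eval_seq => k lt_kn; rewrite /insert_seq; index_cases.
Qed.

Definition cocycle_on (G : Mat -> Prop) n (f : cochain p n) :=
  forall h, (forall k, G (h k)) -> eval_seq (delta f) h = 0.

Lemma cup1_cocycle (G : Mat -> Prop) n (f : cochain p n) psi : cocycle_on G f ->
  (forall a b, G a -> G b -> psi (a *m b) = psi a + psi b) ->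
  cocycle_on G (cup1 f psi).
Proof.
move=> f_cocycle psiM h Gh.
have := f_cocycle h Gh; rewrite !eval_seq_delta big_nat_recr //= => delta_f.
rewrite big_nat_recr //= big_nat_recr //=.
have -> : \sum_(0 <= i < n.+1) sign i * eval_seq (cup1 f psi) (face_seq n.+2 i h)
   = (\sum_(0 <= i < n.+1) sign i * eval_seq f (face_seq n.+1 i h)) * psi (h n.+1).
  rewrite mulr_suml; apply: eq_big_nat => i /andP[_ lt_in].
  rewrite eval_seq_cup1 -mulrA; congr (_ * (_ * psi _)); last first.
    by rewrite /face_seq; index_cases.
  by apply: eq_eval_seq => k lt_kn; rewrite /face_seq; index_cases.
have -> : eval_seq (cup1 f psi) (face_seq n.+2 n.+1 h)
          = eval_seq f h * (psi (h n) + psi (h n.+1)).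
  rewrite eval_seq_cup1; congr (_ * _).
    by apply: eq_eval_seq => k lt_kn; rewrite /face_seq; index_cases.
  by rewrite /face_seq; index_cases; apply: psiM.
rewrite /face_seq eqxx eval_seq_cup1 /=.
rewrite [face_seq _ _ _](_ : _ = h) in delta_f; last first.
  by apply: functional_extensionality => k; rewrite /face_seq eqxx.
have -> : \sum_(0 <= i < n.+1) sign i * eval_seq f (face_seq n.+1 i h)
          = - (sign n.+1 * eval_seq f h).
  by apply/eqP; rewrite -addr_eq0 delta_f.
rewrite !signS; ring.
Qed.

Fixpoint cup_homs (psis : nat -> Mat -> F) (n : nat) : cochain p n :=
  match n return cochain p n with
  | 0 => fun _ => 1
  | n'.+1 => cup1 (@cup_homs psis n') (psis n')
  end.
Arguments cup_homs psis n : clear implicits.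

Lemma cup_homs_cocycle (G : Mat -> Prop) psis n :
  (forall i a b, G a -> G b -> psis i (a *m b) = psis i a + psis i b) ->
  cocycle_on G (cup_homs psis n).
Proof.
move=> psisM; elim: n => [|n IHn] h Gh; last exact: (cup1_cocycle IHn (psisM n)).
by rewrite eval_seq_delta big_nat_recl // big_nat1 /eval_seq /sign /= mulr1 mulr1 subrr.
Qed.

Lemma slant_cup_homs_eq0 psis x n h : (forall a, (a <= n)%N -> psis a x = 0) ->
  eval_seq (slant x (cup_homs psis n.+1)) h = 0.
Proof.
elim: n h => [|n IHn] h psis_x0 /=; first by rewrite slant_cup1_0 psis_x0 // mulr0.
rewrite slant_cup1S IHn ?psis_x0 ?mul0r ?mulr0 ?addr0 // => a le_an.
by apply: psis_x0; lia.
Qed.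

Lemma slant_cup_homs psis x n h : (forall a, (a < n)%N -> psis a x = 0) ->
  eval_seq (slant x (cup_homs psis n.+1)) h
  = sign n * psis n x * eval_seq (cup_homs psis n) h.
Proof.
case: n => [|n] psis_x0; first by rewrite /= slant_cup1_0 /sign expr0 mul1r /eval_seq mulr1.
rewrite /= slant_cup1S slant_cup_homs_eq0 ?mul0r ?add0r; last first.
  by move=> a le_an; apply: psis_x0; lia.
by rewrite [eval_seq _ _ * _]mulrC mulrA.
Qed.

(* The cup product of homomorphisms pairs with the torus cycle as a triangular
   determinant: only the diagonal term survives. *)
Lemma torus_pairing_cup_homs psis xs n :
  (forall a b, (a < b)%N -> (b < n)%N -> psis a (xs b) = 0) ->
  torus_pairing xs (cup_homs psis n) = \prod_(i < n) (sign i * psis i (xs i)).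
Proof.
elim: n => [|n IHn] psis_xs0; first by rewrite big_ord0.
rewrite big_ord_recr /=.
have -> : slant (xs n) (cup_homs psis n.+1)
          = fun g => sign n * psis n (xs n) * cup_homs psis n g.
  apply: functional_extensionality => g.
  rewrite -eval_seq_of_tuple -[cup_homs psis n g]eval_seq_of_tuple.
  by apply: slant_cup_homs => a lt_an; apply: psis_xs0.
rewrite torus_pairingZ IHn 1?mulrC // => a b lt_ab lt_bn.
by apply: psis_xs0 => //; lia.
Qed.

Section PairingRank.
Variables (r : nat) (P : Mat -> Prop).
Hypothesis P1 : P 1.
Hypothesis P_comm : forall a b, P a -> P b -> a *m b = b *m a.
Hypothesis P_Gamma : forall a, P a -> inGamma p r a.

Lemma torus_pairing_factor n : cohom_fin_gen p r n.+1 ->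
  exists m, forall K (z : 'I_K -> cochain p n.+1) (xs : 'I_K -> nat -> Mat),
    (forall k, is_cocycle r (z k)) -> (forall l i, P (xs l i)) ->
    exists (A : 'M[F]_(K, m)) (B : 'M[F]_(m, K)),
      \matrix_(k, l) torus_pairing (xs l) (z k) = A *m B.
Proof.
move=> [m [c [_ span]]]; exists m => K z xs z_cocycle P_xs.
have [a a_span] := fin_all_exists (fun k => span _ (z_cocycle k)).
exists (\matrix_(k, i) a k i), (\matrix_(i, l) torus_pairing (xs l) (c i)).
apply/matrixP => k l; rewrite !mxE.
have [b b_cob] := a_span k.
have pairing0 : torus_pairing (xs l) (fun g => z k g - \sum_(i < m) a k i * c i g) = 0.
  apply: (torus_pairing_coboundary P1 P_comm (b := b)) => // h Ph.
  by rewrite /eval_seq b_cob // => i; apply: P_Gamma; apply: Ph.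
move: pairing0; rewrite torus_pairingB torus_pairing_sum => /subr0_eq ->.
by apply: eq_bigr => i _; rewrite torus_pairingZ !mxE.
Qed.

End PairingRank.

End SlantProduct.

Arguments cup_homs {p} psis n.

Section CongruenceSubgroup.
Variables (p r : nat).
Hypothesis p_prime : prime p.
Hypothesis r_gt0 : (0 < r)%N.
Local Notation q := ((p ^ r)%N%:R : {poly int}).

Definition elem12 (s : {poly int}) : Mat := 1 + q *: (s *: delta_mx 0 1).

Ltac ord2_cases i := case: i => [[|[|?]] ?] //.

Lemma elem12D s s' : elem12 s *m elem12 s' = elem12 (s + s').
Proof.
apply/matrixP => i j; rewrite !mxE !big_ord_recl big_ord0 !mxE.
by ord2_cases i; ord2_cases j; rewrite /= ?mxE /=; ring.
Qed.

Lemma elem12_0 : elem12 0 = 1.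
Proof. by rewrite /elem12 scale0r scaler0 addr0. Qed.

Lemma det_elem12 s : \det (elem12 s) = 1.
Proof.
rewrite -det_tr det_trig; last first.
  apply/is_trig_mxP => i j; rewrite !mxE.
  by ord2_cases i; ord2_cases j; rewrite /= ?mxE //= => _; ring.
by rewrite big_ord_recl big_ord1 /elem12 !mxE /=; ring.
Qed.

Lemma elem12_Gamma s : inGamma p r (elem12 s).
Proof. by split; [exact: det_elem12 | exists (s *: delta_mx 0 1)]. Qed.

Definition is_elem12 (M : Mat) := exists s, M = elem12 s.

Lemma is_elem12_1 : is_elem12 1.
Proof. by exists 0; rewrite elem12_0. Qed.

Lemma is_elem12_comm a b : is_elem12 a -> is_elem12 b -> a *m b = b *m a.
Proof. by move=> [s ->] [t ->]; rewrite !elem12D addrC. Qed.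

Lemma is_elem12_Gamma a : is_elem12 a -> inGamma p r a.
Proof. by move=> [s ->]; exact: elem12_Gamma. Qed.

Definition coef12 (a : nat) (M : Mat) : 'F_p :=
  (((M 0 1)`_a %/ (p ^ r)%N%:R)%Z)%:~R.

Lemma coef12E a (M : Mat) s : M 0 1 = q * s -> coef12 a M = (s`_a)%:~R.
Proof.
have pr_neq0 : (p ^ r)%N%:R != 0 :> int by rewrite pnatr_eq0 -lt0n expn_gt0 prime_gt0.
by move=> M01; rewrite /coef12 M01 mulr_natl coefMn -[_ *+ _]mulr_natr mulzK.
Qed.

Lemma coef12_elem12 a s : coef12 a (elem12 s) = (s`_a)%:~R.
Proof. by apply: coef12E; rewrite !mxE /=; ring. Qed.

(* The (1,2) entry of a product of elements of Gamma is the sum of their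
   (1,2) entries plus a multiple of p^(2r). *)
Lemma coef12M a (M M' : Mat) : inGamma p r M -> inGamma p r M' ->
  coef12 a (M *m M') = coef12 a M + coef12 a M'.
Proof.
move=> [_ [N ->]] [_ [N' ->]].
have entry12 (L : Mat) : (1 + q *: L) 0 1 = q * L 0 1 by rewrite !mxE /=; ring.
rewrite (coef12E a (entry12 N)) (coef12E a (entry12 N')).
have entry12M : ((1 + q *: N) *m (1 + q *: N')) 0 1
    = q * (N 0 1 + N' 0 1 + q * (N 0 0 * N' 0 1 + N 0 1 * N' 1 1)).
  have lift01 : lift ord0 ord0 = 1 :> 'I_2 by apply: val_inj.
  by rewrite !mxE !big_ord_recl big_ord0 !mxE /= lift01; ring.
rewrite (coef12E a entry12M) !coefD mulr_natl coefMn !intrD -mulr_natr intrM.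
have -> : (((p ^ r)%N%:R : int)%:~R : 'F_p) = (p ^ r)%N%:R by rewrite natz.
by rewrite natrX pchar_Fp_0 // expr0n eqn0Ngt r_gt0 mulr0 addr0.
Qed.

(* Family k reads the coefficients 2k (a = 0) and 2a+1 (a > 0): distinct odd
   weights make the pairing triangular in (a, b), and the even weight at a = 0
   makes it diagonal in (k, l). *)
Definition weight (k a : nat) : nat := if a == 0%N then (2 * k)%N else (2 * a).+1.

Definition test_homs (k : nat) : nat -> Mat -> 'F_p := fun a => coef12 (weight k a).
Definition test_torus (l : nat) : nat -> Mat := fun b => elem12 'X^(weight l b).

Lemma test_homs_torus k l a b :
  test_homs k a (test_torus l b) = (weight k a == weight l b)%:R.
Proof. by rewrite /test_homs /test_torus coef12_elem12 coefXn natz. Qed.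

Lemma test_cocycle n k : is_cocycle r (cup_homs (test_homs k) n).
Proof.
move=> g Gg; rewrite -eval_seq_of_tuple.
apply: (@cup_homs_cocycle p (inGamma p r)) => [a M M' | m].
  exact: coef12M.
by apply: seq_of_tuple_in => //; rewrite -elem12_0; apply: elem12_Gamma.
Qed.

Lemma torus_pairing_test n k l :
  torus_pairing (test_torus l) (cup_homs (test_homs k) n.+1)
  = (\prod_(i < n.+1) sign p i) * (k == l)%:R.
Proof.
rewrite torus_pairing_cup_homs => [|a b lt_ab _]; last first.
  rewrite test_homs_torus /weight (_ : (b == 0%N) = false); last by apply/eqP; lia.
  by case: (a == 0%N); case: eqP => //; lia.
rewrite big_split /=; congr (_ * _); rewrite big_ord_recl big1 ?mulr1 => [|i _].
  by rewrite test_homs_torus /weight /= eqn_pmul2l.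
by rewrite test_homs_torus /weight /= eqxx.
Qed.

End CongruenceSubgroup.

Theorem theorem5p1 (p r j : nat) :
  prime p -> (1 <= r)%N -> (1 <= j)%N -> ~ cohom_fin_gen p r j.
Proof.
move=> p_prime r_gt0; case: j => // n _ fin_gen.
have [m pairing_factor] := torus_pairing_factor (is_elem12_1 p r) (@is_elem12_comm p r)
  (@is_elem12_Gamma p r) fin_gen.
have [|l i|A [B AB]] := pairing_factor m.+1 (fun k => cup_homs (test_homs p r k) n.+1)
  (fun l => test_torus p r l); [exact: test_cocycle | by eexists |].
pose s := \prod_(i < n.+1) sign p i.
have s_neq0 : s != 0 by apply/prodf_neq0 => i _; rewrite signr_eq0.
have AB_scalar : A *m B = s%:M.
  by rewrite -AB; apply/matrixP => k l; rewrite !mxE torus_pairing_test // mulr_natr.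
have := mxrankM_maxl A B; rewrite AB_scalar mxrank_unit; last first.
  by rewrite unitmxE det_scalar unitfE expf_neq0.
by have := rank_leq_col A; lia.
Qed.
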